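(* Let $p,q$ be two different primes and $\nu\ge 1$ an integer. Then for each 3-CNF formula $\Phi(\bar x)$ with $n$ variables $\bar x=(x_1,\dots,x_n)$ and $\ell$ clauses there is a $\mathbb{Z}[p,q]$-expression $t^\Phi_{p,q}(\bar x)$ of size at most $2^{O(q^\nu\log\ell)}$ (with the implied constant depending only on $p,q$) such that for all $\bar a\in\{0,1\}^n$ we have $t^\Phi_{p,q}(\bar a)=0$ if the number of clauses of $\Phi$ not satisfied by $\bar a$ is divisible by $q^\nu$, and $t^\Phi_{p,q}(\bar a)=1$ otherwise.
   Context: Let $p,q$ be primes. Define $\mathsf b:\mathbb{Z}_p\to\mathbb{Z}_q$ by $\mathsf b(0)=0$ and $\mathsf b(x)=1$ for $x\neq0$. An $n$-ary $\mathbb{Z}[p,q]$-expression in variables $\bar x=(x_1,\dots,x_n)$ is an expression $t(\bar x)=\sum_{\beta\in\mathbb{Z}_p^n,\,c\in\mathbb{Z}_p}\alpha_{\beta,c}\cdot\mathsf b\big(\sum_{i=1}^n\beta_ix_i+c\big)$ with coefficients $\alpha_{\beta,c}\in\mathbb{Z}_q$, where the inner sums and products $\beta_ix_i$ are computed modulo $p$ and the outer sum and the multiplications by $\alpha_{\beta,c}$ modulo $q$; it defines a function $\mathbb{Z}_p^n\to\mathbb{Z}_q$, evaluated on $\{0,1\}^n\subseteq\mathbb{Z}_p^n$. Its size is $1+|L(t)|$, where $L(t)=\{(\beta,c):\alpha_{\beta,c}\neq0\}$. *)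

From mathcomp Require Import all_boot all_algebra.
Set Implicit Arguments. Unset Strict Implicit. Unset Printing Implicit Defensive.
Import GRing.Theory.
Local Open Scope ring_scope.

(* A literal over variables x_0..x_{n-1}: (i, true) is x_i, (i, false) is ~x_i. *)
Definition literal (n : nat) := ('I_n * bool)%type.
Definition clause (n : nat) := seq (literal n).
(* A CNF formula is a list (multiset) of clauses; its number of clauses is its size. *)
Definition cnf (n : nat) := seq (clause n).

Definition is_3cnf n (Phi : cnf n) : bool := all (fun C => size C <= 3)%N Phi.

Definition lit_sat n (a : {ffun 'I_n -> bool}) (l : literal n) : bool :=
  a l.1 == l.2.
Definition clause_sat n (a : {ffun 'I_n -> bool}) (C : clause n) : bool :=
  has (lit_sat a) C.
Definition num_unsat n (Phi : cnf n) (a : {ffun 'I_n -> bool}) : nat :=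
  count (fun C => ~~ clause_sat a C) Phi.

(* Z[p,q]-expressions in n variables: coefficient alpha_{beta,c} in Z_q for each
   beta in Z_p^n and c in Z_p. *)
Definition zpq_expr (p q n : nat) := {ffun ({ffun 'I_n -> 'F_p} * 'F_p) -> 'F_q}.

Definition bfun (p q : nat) (x : 'F_p) : 'F_q := (x != 0)%:R.

Definition zpq_eval p q n (t : zpq_expr p q n) (a : {ffun 'I_n -> bool}) : 'F_q :=
  \sum_(k : {ffun 'I_n -> 'F_p} * 'F_p)
     t k * bfun q (\sum_(i < n) k.1 i * (a i)%:R + k.2).

Definition zpq_size p q n (t : zpq_expr p q n) : nat :=
  1 + #|[set k | t k != 0%R]|.

From mathcomp Require Import all_boot all_algebra.
From mathcomp Require Import zify.
Set Implicit Arguments. Unset Strict Implicit. Unset Printing Implicit Defensive.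
Import GRing.Theory.

(* For a set S of clauses, "every clause of S is falsified" is the NOR of the at
   most 3|S| literals of S.  If v_1..v_m in {0,1} are the values of m literals,
   then over Z_p the sum over g in Z_p^m of b(sum g_j v_j + 1) - b(sum g_j v_j)
   is p^m when all v_j = 0 and 0 otherwise (shifting g_j for some v_j <> 0 maps
   one half of the sum onto the other).  Each sum g_j v_j + c is an affine form
   in the variables and p is invertible mod q, so the NOR is a Z[p,q]-expression
   with 2 p^m terms.
   For k < Q = q^nu the binomial coefficients C(N, k) mod q are Q-periodic in N,
   because (1 + X)^Q = 1 + X^Q in characteristic q; by triangular interpolation
   every Q-periodic map N -> Z_q, in particular [Q does not divide N], is
   sum_{k<Q} c_k C(N, k).  Taking for N the number of falsified clauses, C(N, k)
   counts the k-sets of falsified clauses, so the target function is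
   sum_{|S|<Q} c_|S| NOR(S), a sum of at most (l+1)^Q 2 p^(3Q) terms. *)

Lemma card_small_sets (T : finType) (k : nat) :
  #|[set S : {set T} | #|S| <= k]| <= #|T|.+1 ^ k.
Proof.
pose code (S : {set T}) : {ffun 'I_k -> option T} :=
  [ffun i : 'I_k => nth None (map Some (enum S)) i].
have mem_code (S : {set T}) : #|S| <= k ->
    forall x, (x \in S) = (Some x \in codom (code S)).
  move=> Sk x; apply/idP/codomP => [xS | [i]].
    have xi : index x (enum S) < k.
      by rewrite (leq_trans _ Sk) // cardE index_mem mem_enum.
    exists (Ordinal xi); rewrite ffunE /= (nth_map x) ?index_mem ?mem_enum //.
    by rewrite nth_index ?mem_enum.
  rewrite ffunE; case: (ltnP i (size (enum S))) => hi.
    by rewrite (nth_map x) // => -[->]; rewrite -mem_enum mem_nth.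
  by rewrite nth_default // size_map.
rewrite -[X in _ <= X ^ _]card_option -[k in _ <= _ ^ k]card_ord -card_ffun.
apply: (leq_card_in code) => S1 S2; rewrite !inE => S1k S2k eq12.
by apply/setP => x; rewrite (mem_code _ S1k) (mem_code _ S2k) eq12.
Qed.

Lemma card_bigcup_le (I T : finType) (P : pred I) (F : I -> {set T}) :
  #|\bigcup_(i | P i) F i| <= \sum_(i | P i) #|F i|.
Proof.
elim/big_rec2: _ => [|i m U _ le_Um]; first by rewrite cards0.
by rewrite (leq_trans (leq_card_setU _ _).1) ?leq_add2l.
Qed.

Lemma card_nth_count (T : Type) (x0 : T) (P : pred T) (s : seq T) :
  #|[set i : 'I_(size s) | P (nth x0 s i)]| = count P s.
Proof.
rewrite -sum1_count (big_nth x0) big_mkord -sum1_card.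
by apply: eq_bigl => i; rewrite inE.
Qed.

Lemma size_bound_arith (L p Q : nat) : 1 < L -> 0 < p -> 0 < Q ->
  1 + L ^ Q * (2 * p ^ (3 * Q)) <= L ^ ((3 * p + 3) * Q).
Proof.
move=> L_gt1 p_gt0 Q_gt0.
have pL : p ^ (3 * Q) <= L ^ (p * (3 * Q)).
  by rewrite [leqRHS]expnM leq_exp2r ?muln_gt0 ?Q_gt0 // ltnW // ltn_expl.
have L4 : 4 <= L ^ (2 * Q).
  apply: (@leq_trans (L ^ 2)); first by rewrite (@leq_exp2r 2 L 2).
  by rewrite leq_pexp2l ?(ltnW L_gt1) // leq_pmulr.
have x_gt0 : 0 < L ^ Q * p ^ (3 * Q) by rewrite muln_gt0 !expn_gt0 p_gt0 (ltnW L_gt1).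
have -> : (3 * p + 3) * Q = 2 * Q + (Q + p * (3 * Q)) by lia.
rewrite mulnCA 2!expnD; apply: (@leq_trans (4 * (L ^ Q * p ^ (3 * Q)))).
  by move: x_gt0; set x := L ^ Q * _; lia.
by rewrite leq_mul // leq_mul.
Qed.

Local Open Scope ring_scope.

Lemma sum_subsets_binomial (R : nzSemiRingType) (T : finType) (U : {set T})
    (c : nat -> R) (m : nat) :
  \sum_(S : {set T} | (#|S| < m)%N) c #|S| * (S \subset U)%:R
    = \sum_(k < m) c k * 'C(#|U|, k)%:R.
Proof.
under [RHS]eq_bigr => k _.
  rewrite -cards_draws -sumr_const mulr_sumr.
  under eq_bigr => S /[!inE] /andP[_ /eqP <-] do rewrite mulr1.
  over.
rewrite (exchange_big_dep predT) //= big_mkcond /=; apply: eq_bigr => S _.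
rewrite (eq_bigl (fun k : 'I_m => (S \subset U) && (k == #|S| :> nat))); last first.
  by move=> k; rewrite inE eq_sym.
rewrite (big_ord1_cond_eq _ (fun=> c #|S|) (fun=> S \subset U)); case: ltnP => //= _.
by case: (S \subset U); rewrite ?mulr1 ?mulr0.
Qed.

Lemma coef_exprXD1n (R : nzSemiRingType) (N k : nat) :
  (('X + 1 : {poly R}) ^+ N)`_k = 'C(N, k)%:R.
Proof.
rewrite exprD1n coef_sum.
under eq_bigr => i _ do rewrite coefMn coefXn.
case: (ltnP k N.+1) => [kN | Nk]; last first.
  rewrite bin_small // big1 // => i _.
  by rewrite eq_sym (ltn_eqF (leq_trans (ltn_ord i) Nk)) mul0rn.
rewrite (bigD1 (Ordinal kN)) //= eqxx big1 ?addr0 // => i.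
by rewrite -val_eqE /= eq_sym => /negPf ->; rewrite mul0rn.
Qed.

Lemma binomial_periodic_pchar (R : comNzRingType) (Q N k : nat) :
  [pchar R].-nat Q -> (k < Q)%N -> 'C(N + Q, k)%:R = 'C(N, k)%:R :> R.
Proof.
move=> charQ kQ; rewrite -!coef_exprXD1n exprD [X in _ * X]exprDn_pchar ?expr1n; last first.
  by rewrite (eq_pnat _ (@pchar_poly R)).
by rewrite mulrDr mulr1 coefD coefMXn kQ add0r.
Qed.

Lemma binomial_interpolation {R : nzRingType} (m : nat) (h : nat -> R) :
  exists c : nat -> R, forall N, (N < m)%N ->
    \sum_(k < m) c k * 'C(N, k)%:R = h N.
Proof.
elim: m => [|m [c hc]]; first by exists (fun=> 0).
pose d := h m - \sum_(k < m) c k * 'C(m, k)%:R.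
exists (fun k => if k == m then d else c k) => N; rewrite big_ord_recr /= eqxx.
under eq_bigr => k _ do rewrite ltn_eqF //.
rewrite ltnS leq_eqVlt => /orP[/eqP-> | Nm].
  by rewrite binn mulr1 addrC subrK.
by rewrite bin_small // mulr0 addr0 hc.
Qed.

Lemma periodic_binomial_expansion (R : comNzRingType) (Q : nat) (h : nat -> R) :
  (0 < Q)%N -> [pchar R].-nat Q -> (forall N, h (N + Q)%N = h N) ->
  exists c : nat -> R, forall N, \sum_(k < Q) c k * 'C(N, k)%:R = h N.
Proof.
move=> Q_gt0 charQ h_per; have [c hc] := binomial_interpolation Q h.
exists c; elim/ltn_ind => N IH; case: (ltnP N Q) => [|QN]; first exact: hc.
rewrite -(subnK QN) h_per -IH ?ltn_subrL ?Q_gt0 ?(leq_trans Q_gt0 QN) //.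
by apply: eq_bigr => k _; rewrite binomial_periodic_pchar.
Qed.

Lemma sum_shift_linear_form (K : finFieldType) (R : zmodType) (m : nat)
    (F : K -> R) (v : 'I_m -> K) :
  \sum_(g : {ffun 'I_m -> K}) (F (\sum_j g j * v j + 1) - F (\sum_j g j * v j))
    = if [forall j, v j == 0] then (F 1 - F 0) *+ (#|K| ^ m) else 0.
Proof.
case: ifPn => [/forallP v0 | /forallPn [j vj_neq0]].
  have form0 (g : {ffun 'I_m -> K}) : \sum_j g j * v j = 0.
    by apply: big1 => j _; rewrite (eqP (v0 j)) mulr0.
  under eq_bigr => g _ do rewrite form0 add0r.
  by rewrite sumr_const card_ffun card_ord.
pose shift (g : {ffun 'I_m -> K}) := [ffun i => g i + (i == j)%:R / v j].
have shift_inj : injective shift.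
  move=> g1 g2 /ffunP eq12; apply/ffunP => i.
  by have := eq12 i; rewrite !ffunE => /addIr.
have shiftE g : \sum_i shift g i * v i = \sum_i g i * v i + 1.
  under eq_bigr => i _ do rewrite ffunE mulrDl.
  rewrite big_split /=; congr (_ + _).
  rewrite (bigD1 j) //= eqxx mul1r mulVf // big1 ?addr0 // => i /negPf->.
  by rewrite mul0r mul0r.
rewrite sumrB [X in _ - X](reindex_inj shift_inj) /=.
by under [X in _ - X]eq_bigr => g _ do rewrite shiftE; rewrite subrr.
Qed.

Section Expressions.
Variables p q n : nat.

Local Notation key := ({ffun 'I_n -> 'F_p} * 'F_p)%type.
Local Notation expr := (zpq_expr p q n).
Implicit Types (k : key) (t : expr) (a : {ffun 'I_n -> bool}).

Definition affine_eval k a : 'F_p := \sum_(i < n) k.1 i * (a i)%:R + k.2.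

Definition lit_key (l : literal n) : key :=
  ([ffun i => (if l.2 then 1 else -1) * (i == l.1)%:R], (~~ l.2)%:R).

Lemma affine_eval_lit (l : literal n) a : affine_eval (lit_key l) a = (lit_sat a l)%:R.
Proof.
rewrite /affine_eval (bigD1 l.1) //= ffunE eqxx mulr1 big1 ?addr0 => [|i /negPf i_l].
  rewrite /lit_sat; case: l => x [] /=; case: (a x);
  by rewrite ?mul1r ?addr0 ?mulr0 ?add0r ?mulN1r ?addNr.
by rewrite ffunE i_l mulr0 mul0r.
Qed.

Lemma affine_eval_shift k c a : affine_eval (k.1, k.2 + c) a = affine_eval k a + c.
Proof. exact: addrA. Qed.

Definition key_comb m (g : 'I_m -> 'F_p) (ks : 'I_m -> key) : key :=
  ([ffun i => \sum_j g j * (ks j).1 i], \sum_j g j * (ks j).2).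

Lemma affine_eval_comb m (g : 'I_m -> 'F_p) (ks : 'I_m -> key) a :
  affine_eval (key_comb g ks) a = \sum_j g j * affine_eval (ks j) a.
Proof.
rewrite /affine_eval /=.
under eq_bigr => i _ do rewrite ffunE mulr_suml.
rewrite exchange_big -big_split /=; apply: eq_bigr => j _.
by rewrite mulrDr mulr_sumr; congr (_ + _); apply: eq_bigr => i _; rewrite mulrA.
Qed.

Definition zpq_supp t := [set k | t k != 0].

Definition zpq_atom k : expr := [ffun k' => (k' == k)%:R].

Lemma zpq_eval_atom k a : zpq_eval (zpq_atom k) a = bfun q (affine_eval k a).
Proof.
rewrite /zpq_eval (bigD1 k) //= ffunE eqxx mul1r [X in _ + X]big1 ?addr0 // => k' /negPf k'k.
by rewrite ffunE k'k mul0r.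
Qed.

Lemma zpq_supp_atom k : zpq_supp (zpq_atom k) = [set k].
Proof.
apply/setP => k'; rewrite !inE ffunE.
by case: (k' == k); rewrite ?oner_eq0 ?eqxx.
Qed.

Lemma zpq_evalB t1 t2 a : zpq_eval (t1 - t2) a = zpq_eval t1 a - zpq_eval t2 a.
Proof.
by rewrite /zpq_eval -sumrB; apply: eq_bigr => k _; rewrite !ffunE mulrBl.
Qed.

Lemma zpq_suppB t1 t2 : zpq_supp (t1 - t2) \subset zpq_supp t1 :|: zpq_supp t2.
Proof.
apply/subsetP => k; rewrite !inE !ffunE; apply: contraR.
by rewrite negb_or !negbK => /andP[/eqP-> /eqP->]; rewrite subrr.
Qed.

Section Combination.
Variables (I : finType) (P : pred I) (w : I -> 'F_q) (e : I -> expr).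

Definition zpq_comb : expr := [ffun k => \sum_(i | P i) w i * e i k].

Lemma zpq_eval_comb a :
  zpq_eval zpq_comb a = \sum_(i | P i) w i * zpq_eval (e i) a.
Proof.
rewrite /zpq_eval; under eq_bigr => k _ do rewrite ffunE mulr_suml.
rewrite exchange_big; apply: eq_bigr => i _; rewrite mulr_sumr.
by apply: eq_bigr => k _; rewrite mulrA.
Qed.

Lemma card_zpq_supp_comb :
  (#|zpq_supp zpq_comb| <= \sum_(i | P i) #|zpq_supp (e i)|)%N.
Proof.
apply: leq_trans (card_bigcup_le P (fun i => zpq_supp (e i))).
apply/subset_leq_card/subsetP => k; rewrite inE ffunE; apply: contraR => k_out.
rewrite big1 // => i Pi.
have : k \notin zpq_supp (e i) by apply: contra k_out => k_in; apply/bigcupP; exists i.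
by rewrite inE negbK => /eqP->; rewrite mulr0.
Qed.

End Combination.
End Expressions.

Section NorExpression.
Variables (p q n : nat).
Hypotheses (p_pr : prime p) (q_pr : prime q) (p_neq_q : p != q).
Variable L : seq (literal n).

Definition nor_key (g : {ffun 'I_(size L) -> 'F_p}) :=
  key_comb g (fun j => lit_key p (tnth (in_tuple L) j)).

Definition nor_expr : zpq_expr p q n :=
  zpq_comb predT (fun=> (p ^ size L)%:R^-1)
    (fun g => zpq_atom q ((nor_key g).1, (nor_key g).2 + 1) - zpq_atom q (nor_key g)).

Lemma natr_pexpn_Fq_neq0 m : (p ^ m)%:R != 0 :> 'F_q.
Proof.
rewrite natrX expf_neq0 // -(dvdn_charf (pchar_Fp q_pr)).
by rewrite dvdn_prime2 // eq_sym.
Qed.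

Lemma zpq_eval_nor_expr a : zpq_eval nor_expr a = (all (fun l => ~~ lit_sat a l) L)%:R.
Proof.
rewrite zpq_eval_comb -mulr_sumr.
under eq_bigr => g _ do rewrite zpq_evalB !zpq_eval_atom affine_eval_shift affine_eval_comb.
under eq_bigr => g _ do under eq_bigr => j _ do rewrite affine_eval_lit.
rewrite sum_shift_linear_form card_Fp //.
have -> : [forall j, (lit_sat a (tnth (in_tuple L) j))%:R == 0 :> 'F_p]
    = all (fun l => ~~ lit_sat a l) L.
  apply/forallP/(all_tnthP (t := in_tuple L)) => /= unsat j; have := unsat j;
    by case: lit_sat; rewrite ?oner_eq0 ?eqxx.
case: all; last by rewrite mulr0.
by rewrite /bfun oner_eq0 eqxx subr0 /= mulVf ?natr_pexpn_Fq_neq0.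
Qed.

Lemma card_zpq_supp_nor_expr : (#|zpq_supp nor_expr| <= 2 * p ^ size L)%N.
Proof.
apply: leq_trans (card_zpq_supp_comb _ _ _) _.
have -> : (2 * p ^ size L = \sum_(g : {ffun 'I_(size L) -> 'F_p}) 2)%N.
  by rewrite sum_nat_const card_ffun card_Fp // card_ord mulnC.
apply: leq_sum => g _.
apply: leq_trans (subset_leq_card (zpq_suppB _ _)) _.
by rewrite (leq_trans (leq_card_setU _ _).1) // !zpq_supp_atom !cards1.
Qed.

End NorExpression.

Section CnfExpression.
Variables (p q n : nat) (Phi : cnf n).
Implicit Types (a : {ffun 'I_n -> bool}) (S : {set 'I_(size Phi)}).

Definition unsat_clauses a := [set i : 'I_(size Phi) | ~~ clause_sat a (nth [::] Phi i)].

Lemma card_unsat_clauses a : #|unsat_clauses a| = num_unsat Phi a.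
Proof. exact: card_nth_count. Qed.

Definition clause_lits S : seq (literal n) :=
  [seq l | i : 'I_(size Phi) <- enum S, l <- nth [::] Phi i].

Lemma all_unsat_clause_lits a S :
  all (fun l => ~~ lit_sat a l) (clause_lits S) = (S \subset unsat_clauses a).
Proof.
apply/all_allpairsP/subsetP => [unsat i iS | sub i l /[!mem_enum] iS].
  by rewrite inE /clause_sat -all_predC; apply/allP => l; apply: unsat; rewrite mem_enum.
by have := sub i iS; rewrite inE /clause_sat -all_predC => /allP; apply.
Qed.

Lemma size_clause_lits k S :
  all (fun C => size C <= k)%N Phi -> (size (clause_lits S) <= k * #|S|)%N.
Proof.
move=> /allP Phi_k; rewrite size_allpairs_dep sumnE big_map big_enum /= mulnC -sum_nat_const.
by apply: leq_sum => i _; rewrite Phi_k ?mem_nth.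
Qed.

Definition cnf_expr (c : nat -> 'F_q) (Q : nat) : zpq_expr p q n :=
  zpq_comb (fun S => #|S| < Q)%N (fun S => c #|S|) (fun S => nor_expr p q (clause_lits S)).

Hypotheses (p_pr : prime p) (q_pr : prime q) (p_neq_q : p != q).

Lemma zpq_eval_cnf_expr c Q a :
  zpq_eval (cnf_expr c Q) a = \sum_(k < Q) c k * 'C(num_unsat Phi a, k)%:R.
Proof.
rewrite zpq_eval_comb.
under eq_bigr => S _ do rewrite zpq_eval_nor_expr // all_unsat_clause_lits.
by rewrite sum_subsets_binomial card_unsat_clauses.
Qed.

Lemma card_zpq_supp_cnf_expr c Q : is_3cnf Phi ->
  (#|zpq_supp (cnf_expr c Q)| <= (size Phi).+1 ^ Q * (2 * p ^ (3 * Q)))%N.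
Proof.
move=> Phi3; have nor_small S : (#|S| < Q)%N ->
    (#|zpq_supp (nor_expr p q (clause_lits S))| <= 2 * p ^ (3 * Q))%N.
  move=> S_small; apply: leq_trans (card_zpq_supp_nor_expr q p_pr _) _.
  rewrite leq_mul2l leq_pexp2l ?prime_gt0 // (leq_trans (size_clause_lits S Phi3)) //.
  by rewrite leq_mul2l ltnW.
apply: leq_trans (card_zpq_supp_comb _ _ _) _.
apply: leq_trans (leq_sum _ nor_small) _.
rewrite sum_nat_const leq_mul2r -[X in (_ <= X.+1 ^ _)%N]card_ord; apply/orP; right.
apply: leq_trans (card_small_sets _ Q); apply/subset_leq_card/subsetP => S.
by rewrite !inE => /ltnW.
Qed.

End CnfExpression.

Theorem lemma3p5 (p q : nat) :
  prime p -> prime q -> p != q ->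
  exists C : nat, forall (nu : nat), (1 <= nu)%N ->
  forall (n : nat) (Phi : cnf n), is_3cnf Phi ->
  exists t : zpq_expr p q n,
    (zpq_size t <= (size Phi).+1 ^ (C * q ^ nu))%N /\
    forall a : {ffun 'I_n -> bool},
      zpq_eval t a = (if (q ^ nu %| num_unsat Phi a)%N then 0 else 1).
Proof.
move=> p_pr q_pr p_neq_q; exists (3 * p + 3)%N => nu _ n Phi Phi3.
have Q_gt0 : (0 < q ^ nu)%N by rewrite expn_gt0 prime_gt0.
case: Phi Phi3 => [_ | C0 Phi' Phi3].
  exists [ffun=> 0]; split.
    rewrite /zpq_size exp1n (_ : [set k | _] = set0) ?cards0 //.
    by apply/setP => k; rewrite !inE ffunE eqxx.
  move=> a; rewrite /num_unsat /= dvdn0 /zpq_eval big1 // => k _.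
  by rewrite ffunE mul0r.
have [c hc] : exists c : nat -> 'F_q, forall N,
    \sum_(k < q ^ nu) c k * 'C(N, k)%:R = if (q ^ nu %| N)%N then 0 else 1.
  apply: periodic_binomial_expansion Q_gt0 _ _ => [|N]; last by rewrite dvdn_addl.
  by rewrite pnatX (pnatE _ q_pr) pchar_Fp.
exists (cnf_expr p (C0 :: Phi') c (q ^ nu)); split; last first.
  by move=> a; rewrite zpq_eval_cnf_expr // hc.
apply: leq_trans (size_bound_arith _ (prime_gt0 p_pr) Q_gt0) => //.
by rewrite leq_add2l card_zpq_supp_cnf_expr.
Qed.
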